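(* Suppose that every connected finite simple graph $G$ of order $n\geq 5$ with non-singular adjacency matrix satisfies $\mathcal{E}(G)\geq n-1+\bar d$. Then every finite simple graph $G$ (connected or not) of order $n\geq 5$ with non-singular adjacency matrix satisfies $\mathcal{E}(G)\geq n-1+\bar d$.
   Context: For a finite simple graph $G$ with $n$ vertices and $m$ edges, $A(G)$ is its adjacency matrix with eigenvalues $\lambda_1\ge\cdots\ge\lambda_n$, and the energy is $\mathcal{E}(G)=\sum_{i=1}^n|\lambda_i|$. $\bar d=2m/n$ is the average degree. *)

From mathcomp Require Import all_boot all_order all_algebra all_field.
Set Implicit Arguments. Unset Strict Implicit. Unset Printing Implicit Defensive.
Import Order.TTheory GRing.Theory Num.Theory.
Local Open Scope ring_scope.

(* Scalars are algebraic complex numbers algC (an algebraically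
   closed field), so that the characteristic polynomial splits. *)
Definition simple_graph n (e : rel 'I_n) : Prop := symmetric e /\ irreflexive e.

Definition connected_graph n (e : rel 'I_n) : Prop := forall x y, connect e x y.

Definition adjmx n (e : rel 'I_n) : 'M[algC]_n := \matrix_(i, j) (e i j)%:R.

Definition nedges n (e : rel 'I_n) : nat :=
  #|[set p : 'I_n * 'I_n | e p.1 p.2 && (p.1 < p.2)%N]|.

Definition avgdeg n (e : rel 'I_n) : algC := (2 * nedges e)%:R / n%:R.

Definition eigenvalues n (A : 'M[algC]_n) : seq algC :=
  sval (closed_field_poly_normal (char_poly A)).

Definition energy n (e : rel 'I_n) : algC :=
  \sum_(z <- eigenvalues (adjmx e)) `|z|.

From mathcomp Require Import all_boot all_order all_algebra all_field.
From mathcomp Require Import fingroup perm ring lra zify.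
Set Implicit Arguments. Unset Strict Implicit. Unset Printing Implicit Defensive.
Import Order.TTheory GRing.Theory Num.Theory.
Local Open Scope ring_scope.

(* Induction on the number of vertices.  A disconnected graph splits into two
   vertex-disjoint parts: the spectrum of the union is the union of the spectra,
   degree sums add and determinants multiply.  A nonsingular graph has no
   isolated vertex, so both parts are nonsingular, with at least two vertices and
   average degree d >= 1.  The bound n - 1 + d fails for some small parts (the
   path P4 and the paw), so the induction carries the weaker bound
   n - 1 + d - (d - 1) / 3 for n <= 4, which is still superadditive under such
   unions.  A nonsingular graph on at most four vertices is complete, of energy
   2 (n - 1), or has four vertices and determinant 1; then the spectral theorem
   gives real eigenvalues with sum 0, sum of squares the degree sum and
   product 1, and they split into two pairs with positive products. *)

(** * Spectra of matrices *)

Lemma char_poly_eigenvalues n (A : 'M[algC]_n) :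
  char_poly A = \prod_(z <- eigenvalues A) ('X - z%:P).
Proof.
rewrite /eigenvalues; case: closed_field_poly_normal => s /= {1}->.
by rewrite (monicP (char_poly_monic A)) scale1r.
Qed.

Lemma perm_eq_eigenvalues n (A : 'M[algC]_n) s :
  char_poly A = \prod_(z <- s) ('X - z%:P) -> perm_eq (eigenvalues A) s.
Proof. by move=> hs; apply: prod_XsubC_eq; rewrite -char_poly_eigenvalues. Qed.

Lemma char_poly_conj (R : comNzRingType) n (P Q A : 'M[R]_n) :
  P *m Q = 1%:M -> char_poly (P *m A *m Q) = char_poly A.
Proof.
move=> PQ; rewrite /char_poly /char_poly_mx.
have -> : 'X%:M - map_mx polyC (P *m A *m Q) =
          map_mx polyC P *m ('X%:M - map_mx polyC A) *m map_mx polyC Q.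
  rewrite !map_mxM mulmxBr mulmxBl; congr (_ - _).
  by rewrite scalar_mxC -mulmxA -map_mxM PQ map_mx1 mulmx1.
by rewrite !det_mulmx mulrAC -det_mulmx -map_mxM PQ map_mx1 det1 mul1r.
Qed.

Lemma eigenvalues_conj n (P Q A : 'M[algC]_n) : P *m Q = 1%:M ->
  perm_eq (eigenvalues (P *m A *m Q)) (eigenvalues A).
Proof.
by move=> PQ; apply: perm_eq_eigenvalues; rewrite char_poly_conj // char_poly_eigenvalues.
Qed.

Lemma eigenvalues_block_diag n1 n2 (A : 'M[algC]_n1) (B : 'M[algC]_n2) :
  perm_eq (eigenvalues (block_mx A 0 0 B)) (eigenvalues A ++ eigenvalues B).
Proof.
apply: perm_eq_eigenvalues.
by rewrite big_cat -!char_poly_eigenvalues /char_poly char_block_diag_mx det_ublock.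
Qed.

Lemma eigenvalue_quadratic (F : fieldType) n (A : 'M[F]_n) b c a :
  A *m A = b *: A + c%:M -> eigenvalue A a -> a ^+ 2 = b * a + c.
Proof.
move=> AA /eigenvalueP [v vA v_neq0].
have vAA : v *m (A *m A) = a ^+ 2 *: v.
  by rewrite mulmxA vA -scalemxAl vA scalerA expr2.
have vbc : v *m (b *: A + c%:M) = (b * a + c) *: v.
  by rewrite mulmxDr -scalemxAr vA scalerA mul_mx_scalar scalerDl.
move: vAA; rewrite AA vbc => /eqP; rewrite -subr_eq0 -scalerBl scaler_eq0.
by rewrite (negbTE v_neq0) orbF subr_eq0 => /eqP.
Qed.

Section Hermitian.
Variables (n : nat) (A : 'M[algC]_n).
Hypothesis hermA : A \is hermsymmx.

Let P := spectralmx A.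
Let d := spectral_diag A.

Lemma spectral_diag_conj : P *m A *m invmx P = diag_mx d.
Proof.
have /orthomx_spectralP AE := hermitian_normalmx hermA.
rewrite [X in _ *m X *m _]AE !mulmxA mulmxV ?spectral_unit // mul1mx.
by rewrite mulmxK ?spectral_unit.
Qed.

Lemma spectral_diag_real i : d 0 i \is Creal.
Proof. exact: (mxOverP (hermitian_spectral_diag_real hermA)). Qed.

Lemma eigenvalues_spectral : perm_eq (eigenvalues A) [seq d 0 i | i <- enum 'I_n].
Proof.
apply: perm_eq_eigenvalues; rewrite big_map big_enum /=.
rewrite -(char_poly_conj A (mulmxV (spectral_unit A))) spectral_diag_conj.
by rewrite char_poly_trig ?diag_mx_is_trig //; apply: eq_bigr => i _; rewrite mxE eqxx.
Qed.

Lemma mxtrace_spectral : \tr A = \sum_i d 0 i.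
Proof. by rewrite -mxtrace_diag -spectral_diag_conj mxtrace_mulC mulKmx ?spectral_unit. Qed.

Lemma mxtrace_sqr_spectral : \tr (A *m A) = \sum_i d 0 i ^+ 2.
Proof.
have -> : \sum_i d 0 i ^+ 2 = \tr (diag_mx d *m diag_mx d).
  by rewrite /mxtrace; apply: eq_bigr => i _; rewrite mul_diag_mx !mxE eqxx mulr1n expr2.
rewrite -spectral_diag_conj !mulmxA mulmxKV ?spectral_unit // -(mulmxA P).
by rewrite [RHS]mxtrace_mulC mulKmx ?spectral_unit.
Qed.

Lemma det_spectral : \det A = \prod_i d 0 i.
Proof.
rewrite -det_diag -spectral_diag_conj !det_mulmx mulrAC -det_mulmx.
by rewrite mulmxV ?spectral_unit // det1 mul1r.
Qed.

End Hermitian.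

(** * Graphs and their decompositions *)

Definition degsum n (e : rel 'I_n) : nat := \sum_i \sum_j e i j.

Lemma double_nedges n (e : rel 'I_n) : simple_graph e -> (2 * nedges e)%N = degsum e.
Proof.
move=> [sym irr].
have -> : nedges e = (\sum_i \sum_j (e i j && (i < j)%N))%N.
  rewrite /nedges -sum1_card pair_big /= big_mkcond /=.
  by apply: eq_bigr => p _; rewrite inE; case: (_ && _).
have -> : degsum e = (\sum_i \sum_j (e i j && (i < j)%N) +
                      \sum_i \sum_j (e i j && (j < i)%N))%N.
  rewrite /degsum -big_split /=; apply: eq_bigr => i _.
  rewrite -big_split /=; apply: eq_bigr => j _.
  case: (ltngtP i j) => ij; rewrite ?andbT ?andbF ?addn0 ?add0n //.
  by rewrite (val_inj ij) irr.
rewrite mul2n -addnn; congr (_ + _)%N.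
by rewrite exchange_big /=; apply: eq_bigr => i _; apply: eq_bigr => j _; rewrite sym.
Qed.

Lemma avgdegE n (e : rel 'I_n) : simple_graph e -> avgdeg e = (degsum e)%:R / n%:R.
Proof. by move=> se; rewrite /avgdeg double_nedges. Qed.

Lemma relpre_simple m n (h : 'I_m -> 'I_n) (e : rel 'I_n) :
  simple_graph e -> simple_graph (relpre h e).
Proof. by move=> [sym irr]; split=> [i j|i] /=; [rewrite sym | exact: irr]. Qed.

Lemma degsum_le n (e : rel 'I_n) : irreflexive e -> (degsum e <= n * n.-1)%N.
Proof.
move=> irr; rewrite -[n in (n * _)%N]card_ord -sum_nat_const; apply: leq_sum => i _.
rewrite (bigD1 i) //= irr add0n -[n in n.-1]card_ord -(cardC1 i) -sum1_card.
by apply: leq_sum => j _; exact: leq_b1.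
Qed.

Lemma degsum_complete n (e : rel 'I_n) :
  (forall i j, e i j = (i != j)) -> degsum e = (n * n.-1)%N.
Proof.
move=> eE; rewrite -[n in (n * _)%N]card_ord -sum_nat_const; apply: eq_bigr => i _.
rewrite (bigD1 i) //= eE eqxx add0n -[n in n.-1]card_ord -(cardC1 i) -sum1_card.
by apply: eq_bigr => j; rewrite eE eq_sym => ->.
Qed.

Lemma det_adjmx_isolated n (e : rel 'I_n) i :
  (forall j, ~~ e i j) -> \det (adjmx e) = 0.
Proof.
move=> iso; rewrite (expand_det_row _ i) big1 // => j _.
by rewrite mxE (negbTE (iso j)) mul0r.
Qed.

Lemma nonsingular_degsum n (e : rel 'I_n) : \det (adjmx e) != 0 -> (n <= degsum e)%N.
Proof.
move=> det_e; rewrite -[n in (n <= _)%N]card_ord -sum1_card; apply: leq_sum => i _.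
have [j eij] : exists j, e i j.
  apply/existsP; apply: contraR det_e => /existsPn iso.
  by rewrite (det_adjmx_isolated iso) eqxx.
by rewrite (bigD1 j) //= eij.
Qed.

Lemma nonsingular_order n (e : rel 'I_n) : (0 < n)%N -> irreflexive e ->
  \det (adjmx e) != 0 -> (2 <= n)%N.
Proof.
move=> n_gt0 irr /nonsingular_degsum/leq_trans/(_ (degsum_le irr)).
by case: n n_gt0 {e irr} => [|[|n]] //; rewrite muln0.
Qed.

Lemma adjmx_herm n (e : rel 'I_n) : symmetric e -> adjmx e \is hermsymmx.
Proof.
move=> sym; apply/is_hermitianmxP; rewrite expr0 scale1r.
by apply/matrixP => i j; rewrite !mxE conjC_nat sym.
Qed.

Lemma mxtrace_adjmx n (e : rel 'I_n) : irreflexive e -> \tr (adjmx e) = 0.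
Proof. by move=> irr; rewrite /mxtrace big1 // => i _; rewrite mxE irr. Qed.

Lemma mxtrace_adjmx_sqr n (e : rel 'I_n) : symmetric e ->
  \tr (adjmx e *m adjmx e) = (degsum e)%:R.
Proof.
move=> sym; rewrite /mxtrace /degsum natr_sum; apply: eq_bigr => i _.
rewrite mxE natr_sum; apply: eq_bigr => j _.
by rewrite !mxE (sym j i) -natrM mulnb andbb.
Qed.

Lemma relpre_bij N n (h : 'I_N -> 'I_n) (e : rel 'I_n) : N = n -> injective h ->
  [/\ perm_eq (eigenvalues (adjmx (relpre h e))) (eigenvalues (adjmx e)),
      \det (adjmx (relpre h e)) = \det (adjmx e) & degsum (relpre h e) = degsum e].
Proof.
move=> eNn; subst N => h_inj; pose s := perm h_inj.
have ss1 : perm_mx s *m perm_mx s^-1 = 1%:M :> 'M[algC]_n.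
  by rewrite -perm_mxM mulgV perm_mx1.
have adjE : adjmx (relpre h e) = perm_mx s *m adjmx e *m perm_mx s^-1.
  rewrite -mulmxA -col_permE -row_permE; apply/matrixP => i j.
  by rewrite !mxE !permE.
split.
- by rewrite adjE; exact: eigenvalues_conj.
- by rewrite adjE !det_mulmx mulrAC -det_mulmx ss1 det1 mul1r.
rewrite /degsum [RHS](reindex_inj h_inj); apply: eq_bigr => i _.
by rewrite [RHS](reindex_inj h_inj).
Qed.

Section BlockDiagonal.
Variables (n1 n2 : nat) (e : rel 'I_(n1 + n2)).
Hypotheses (sym : symmetric e) (cross : forall a b, ~~ e (lshift n2 a) (rshift n1 b)).

Lemma adjmx_block_diag :
  adjmx e = block_mx (adjmx (relpre (lshift n2) e)) 0 0 (adjmx (relpre (@rshift n1 n2) e)).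
Proof.
apply/matrixP => i j; rewrite -(splitK i) -(splitK j).
case: (split i) => a; case: (split j) => b /=;
  rewrite ?block_mxEul ?block_mxEur ?block_mxEdl ?block_mxEdr !mxE //.
  by rewrite (negbTE (cross a b)).
by rewrite sym (negbTE (cross b a)).
Qed.

Lemma degsum_block_diag :
  degsum e = (degsum (relpre (lshift n2) e) + degsum (relpre (@rshift n1 n2) e))%N.
Proof.
rewrite /degsum big_split_ord /=; congr (_ + _)%N.
  apply: eq_bigr => a _; rewrite big_split_ord /= [X in (_ + X)%N]big1 ?addn0 //.
  by move=> b _; rewrite (negbTE (cross a b)).
apply: eq_bigr => a _; rewrite big_split_ord /= big1 ?add0n //.
by move=> b _; rewrite sym (negbTE (cross b a)).
Qed.

End BlockDiagonal.

Lemma disconnected_split n (e : rel 'I_n) x y : simple_graph e -> ~~ connect e x y ->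
  exists n1 n2 (e1 : rel 'I_n1) (e2 : rel 'I_n2),
    [/\ (n1 + n2)%N = n, (0 < n1)%N, (0 < n2)%N, simple_graph e1 & simple_graph e2] /\
    [/\ perm_eq (eigenvalues (adjmx e)) (eigenvalues (adjmx e1) ++ eigenvalues (adjmx e2)),
        \det (adjmx e) = \det (adjmx e1) * \det (adjmx e2) &
        degsum e = (degsum e1 + degsum e2)%N].
Proof.
move=> se nxy; have [sym _] := se.
pose S := [set z | connect e x z].
pose h (i : 'I_(#|S| + #|~: S|)) : 'I_n :=
  match split i with inl a => enum_val a | inr b => enum_val b end.
have hl (a : 'I_#|S|) : h (lshift _ a) = enum_val a by rewrite /h (unsplitK (inl a)).
have hr (b : 'I_#|~: S|) : h (rshift _ b) = enum_val b by rewrite /h (unsplitK (inr b)).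
have inS (a : 'I_#|S|) : enum_val a \in S := enum_valP a.
have notinS (b : 'I_#|~: S|) : enum_val b \notin S by rewrite -in_setC; exact: enum_valP.
have h_inj : injective h.
  move=> i j; rewrite -(splitK i) -(splitK j).
  case: (split i) => a; case: (split j) => b /=; rewrite ?hl ?hr => hab.
  - by rewrite (enum_val_inj hab).
  - by move: (notinS b); rewrite -hab (inS a).
  - by move: (notinS a); rewrite hab (inS b).
  - by rewrite (enum_val_inj hab).
have hsym : symmetric (relpre h e) by move=> i j /=; rewrite sym.
have cross a b : ~~ relpre h e (lshift _ a) (rshift _ b).
  rewrite /= hl hr; apply: contra (notinS b) => eab.
  by rewrite inE (connect_trans _ (connect1 eab)) // -inE.
have [eig_h det_h deg_h] := relpre_bij e (etrans (cardsC S) (card_ord n)) h_inj.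
have blk := adjmx_block_diag hsym cross.
exists #|S|, #|~: S|, (relpre (lshift _) (relpre h e)), (relpre (@rshift _ _) (relpre h e)).
split; split.
- by rewrite cardsC card_ord.
- by apply/card_gt0P; exists x; rewrite inE connect0.
- by apply/card_gt0P; exists y; rewrite in_setC inE.
- exact/relpre_simple/relpre_simple.
- exact/relpre_simple/relpre_simple.
- by rewrite -(permPl eig_h) blk; exact: eigenvalues_block_diag.
- by rewrite -det_h blk det_ublock.
by rewrite -deg_h; exact: degsum_block_diag.
Qed.

(** * Real inequalities and the inductive bound *)

Section RealBounds.
Variable R : realFieldType.
Implicit Types a b c d s : R.

(* The three products multiply to a ^+ 2 * (a * b * c * d) > 0. *)
Lemma pos_partner a b c d : a * b * c * d = 1 ->
  [\/ 0 < a * b, 0 < a * c | 0 < a * d].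
Proof.
move=> prod1; have a_neq0 : a != 0.
  by apply/eqP => a0; move: prod1; rewrite a0 !mul0r => /eqP; rewrite eq_sym oner_eq0.
have prod_gt0 : 0 < (a * b) * (a * c) * (a * d).
  have -> : (a * b) * (a * c) * (a * d) = a ^+ 2 * (a * b * c * d) by ring.
  by rewrite prod1 mulr1 exprn_even_gt0.
have [?|ab] := ltrP 0 (a * b); first by constructor 1.
have [?|ac] := ltrP 0 (a * c); first by constructor 2.
have [?|ad] := ltrP 0 (a * d); first by constructor 3.
by have := mulr_ge0_le0 (mulr_le0 ab ac) ad; lra.
Qed.

(* The sum of the moduli is at least 2 |a + b|, and
   (a + b) ^+ 2 = s / 2 + a * b + c * d >= s / 2 + 2 by AM-GM on (a * b) * (c * d) = 1. *)
Lemma abs4_sum_ge_paired a b c d s : 0 < a * b -> a + b + c + d = 0 ->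
  a ^+ 2 + b ^+ 2 + c ^+ 2 + d ^+ 2 = s -> a * b * c * d = 1 -> 4 <= s <= 28 ->
  (20 + s) / 6 <= `|a| + `|b| + `|c| + `|d|.
Proof.
move=> ab_gt0 sum0 sq prod1 /andP [s_ge4 s_le28].
have abcd : (a * b) * (c * d) = 1 by rewrite -prod1; ring.
have cd_gt0 : 0 < c * d by rewrite -(pmulr_rgt0 _ ab_gt0) abcd ltr01.
have pairs_ge2 : 2 <= a * b + c * d.
  move: ab_gt0 cd_gt0 abcd; set x := a * b; set y := c * d => x_gt0 y_gt0 xy1.
  have := sqr_ge0 (x - 1); nra.
have cdE : c + d = - (a + b) by lra.
set u := `|a + b|.
have u_ge0 : 0 <= u := normr_ge0 _.
have u_sq : s / 2 + 2 <= u ^+ 2.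
  have : (a + b) ^+ 2 + (c + d) ^+ 2 = s + 2 * (a * b + c * d) by rewrite -sq; ring.
  rewrite cdE sqrrN /u real_normK ?num_real //; lra.
have u_ge : (20 + s) / 12 <= u.
  have : 0 <= (s - 4) * (28 - s) by apply: mulr_ge0; lra.
  nra.
have := ler_normD a b; have := ler_normD c d; rewrite cdE normrN -/u; lra.
Qed.

Lemma abs4_sum_ge a b c d s : a + b + c + d = 0 ->
  a ^+ 2 + b ^+ 2 + c ^+ 2 + d ^+ 2 = s -> a * b * c * d = 1 -> 4 <= s <= 28 ->
  (20 + s) / 6 <= `|a| + `|b| + `|c| + `|d|.
Proof.
move=> sum0 sq prod1 s_range; case: (pos_partner prod1) => [ab|ac|ad].
- exact: abs4_sum_ge_paired.
- have sum0' : a + c + b + d = 0 by lra.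
  have sq' : a ^+ 2 + c ^+ 2 + b ^+ 2 + d ^+ 2 = s by lra.
  have prod1' : a * c * b * d = 1 by rewrite -prod1; ring.
  by have := abs4_sum_ge_paired ac sum0' sq' prod1' s_range; lra.
- have sum0' : a + d + b + c = 0 by lra.
  have sq' : a ^+ 2 + d ^+ 2 + b ^+ 2 + c ^+ 2 = s by lra.
  have prod1' : a * d * b * c = 1 by rewrite -prod1; ring.
  by have := abs4_sum_ge_paired ad sum0' sq' prod1' s_range; lra.
Qed.

(* With x_i = M_i / N_i, clearing the denominator N1 + N2 leaves
   (N2 - c1 (N1 + N2)) (x1 - 1) + (N1 - c2 (N1 + N2)) (x2 - 1) + c (x - 1) >= 0. *)
Lemma energy_lb_add_real (N1 N2 M1 M2 c1 c2 c : R) :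
  0 < N1 -> 0 < N2 -> N1 <= M1 -> N2 <= M2 -> 0 <= c ->
  c1 * (N1 + N2) <= N2 -> c2 * (N1 + N2) <= N1 ->
  N1 + N2 - 1 + (M1 + M2) / (N1 + N2) - c * ((M1 + M2) / (N1 + N2) - 1)
  <= (N1 - 1 + M1 / N1 - c1 * (M1 / N1 - 1)) + (N2 - 1 + M2 / N2 - c2 * (M2 / N2 - 1)).
Proof.
move=> N1_gt0 N2_gt0 M1_ge M2_ge c_ge0 c1_le c2_le.
have N_gt0 : 0 < N1 + N2 by lra.
set x1 := M1 / N1; set x2 := M2 / N2; set x := (M1 + M2) / (N1 + N2).
have M1E : M1 = x1 * N1 by rewrite divfK ?gt_eqF.
have M2E : M2 = x2 * N2 by rewrite divfK ?gt_eqF.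
have ME : M1 + M2 = x * (N1 + N2) by rewrite divfK ?gt_eqF.
have x1_ge1 : 1 <= x1 by rewrite ler_pdivlMr // mul1r.
have x2_ge1 : 1 <= x2 by rewrite ler_pdivlMr // mul1r.
have x_ge1 : 1 <= x by rewrite ler_pdivlMr // mul1r; lra.
have : 0 <= c * (x - 1) by apply: mulr_ge0; lra.
have : 0 <= (N2 - c1 * (N1 + N2)) * (x1 - 1) by apply: mulr_ge0; lra.
have : 0 <= (N1 - c2 * (N1 + N2)) * (x2 - 1) by apply: mulr_ge0; lra.
have : (x + 1) * (N1 + N2) <= (x1 + x2 - c1 * (x1 - 1) - c2 * (x2 - 1)) * (N1 + N2).
  nra.
rewrite ler_pM2r //; lra.
Qed.

End RealBounds.

Definition lb_slack (R : numFieldType) (n : nat) : R := if (5 <= n)%N then 0 else 3^-1.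

(* [M] stands for the degree sum 2m, so that [M / n] is the average degree. *)
Definition energy_lb (R : numFieldType) (n M : nat) : R :=
  (n.-1)%:R + M%:R / n%:R - lb_slack R n * (M%:R / n%:R - 1).

Lemma energy_lb_large (R : numFieldType) n M : (5 <= n)%N ->
  energy_lb R n M = (n.-1)%:R + M%:R / n%:R.
Proof. by move=> n5; rewrite /energy_lb /lb_slack n5 mul0r subr0. Qed.

Section EnergyBound.
Variable R : realFieldType.

Lemma natr_pred n : (0 < n)%N -> (n.-1)%:R = n%:R - 1 :> R.
Proof. by move=> n_gt0; rewrite -subn1 natrB. Qed.

Lemma lb_slack_ge0 n : 0 <= lb_slack R n.
Proof. by rewrite /lb_slack; case: ifP => _; rewrite ?invr_ge0 ?ler0n. Qed.

Lemma lb_slack_le n n' : (2 <= n')%N -> lb_slack R n * (n + n')%:R <= n'%:R.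
Proof.
rewrite /lb_slack; case: ifP => [_ _|/negbT n_le4 n'_ge2]; first by rewrite mul0r.
have : (n <= 2 * n')%N by lia.
by rewrite -(ler_nat R) natrD natrM; lra.
Qed.

Lemma energy_lb_add n1 n2 M1 M2 : (2 <= n1)%N -> (2 <= n2)%N ->
  (n1 <= M1)%N -> (n2 <= M2)%N ->
  energy_lb R (n1 + n2) (M1 + M2) <= energy_lb R n1 M1 + energy_lb R n2 M2.
Proof.
move=> n1_ge2 n2_ge2 M1_ge M2_ge.
rewrite /energy_lb !natr_pred ?addn_gt0 ?(leq_trans _ n1_ge2) ?(leq_trans _ n2_ge2) //.
rewrite !natrD; apply: energy_lb_add_real; rewrite ?ltr0n ?ler_nat ?lb_slack_ge0 //;
  try lia.
- by have := lb_slack_le n1 n2_ge2; rewrite natrD.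
by have := lb_slack_le n2 n1_ge2; rewrite natrD addrC.
Qed.

Lemma energy_lb_complete n : (2 <= n)%N -> energy_lb R n (n * n.-1) <= (2 * n.-1)%:R.
Proof.
move=> n_ge2; have n_gt0 : (0 : R) < n%:R by rewrite ltr0n; lia.
have x_eq : (n * n.-1)%:R / n%:R = (n.-1)%:R :> R.
  by rewrite natrM mulrAC divff ?mul1r ?gt_eqF.
have := lb_slack_ge0 n; have : (1 : R) <= (n.-1)%:R by rewrite ler1n; lia.
rewrite /energy_lb x_eq natrM; nra.
Qed.

End EnergyBound.

(** * Spectra of graphs and small nonsingular graphs *)

Lemma energy_real n (e : rel 'I_n) : energy e \is Creal.
Proof. by apply: rpred_sum => z _; exact: normr_real. Qed.

Definition energyR n (e : rel 'I_n) : algR := in_algR (energy_real e).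

Lemma energyR_cat n n1 n2 (e : rel 'I_n) (e1 : rel 'I_n1) (e2 : rel 'I_n2) :
  perm_eq (eigenvalues (adjmx e)) (eigenvalues (adjmx e1) ++ eigenvalues (adjmx e2)) ->
  energyR e = energyR e1 + energyR e2.
Proof. by move=> eig; apply: val_inj; rewrite /= /energy (perm_big _ eig) big_cat. Qed.

Lemma adjmx_spectrum n (e : rel 'I_n) : simple_graph e ->
  exists d : 'I_n -> algR,
    [/\ energyR e = \sum_i `|d i|, forall i, eigenvalue (adjmx e) (val (d i)),
        \sum_i d i = 0, \sum_i d i ^+ 2 = (degsum e)%:R &
        val (\prod_i d i) = \det (adjmx e)].
Proof.
move=> [sym irr]; have herm := adjmx_herm sym.
have eig := eigenvalues_spectral herm.
exists (fun i => in_algR (spectral_diag_real herm i)); split.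
- by apply: val_inj; rewrite /= /energy (perm_big _ eig) big_map big_enum rmorph_sum.
- move=> i; rewrite eigenvalue_root_char char_poly_eigenvalues root_prod_XsubC.
  by rewrite (perm_mem eig); apply: map_f; rewrite mem_enum.
- apply: val_inj; rewrite rmorph_sum /= -(mxtrace_spectral herm); exact: mxtrace_adjmx.
- apply: val_inj; rewrite rmorph_sum rmorph_nat /= -mxtrace_adjmx_sqr //.
  rewrite (mxtrace_sqr_spectral herm).
  by apply: eq_bigr => i _; rewrite expr2.
by rewrite rmorph_prod -det_spectral.
Qed.

Lemma adjmx_complete_sqr n (e : rel 'I_n) : (forall i j, e i j = (i != j)) ->
  adjmx e *m adjmx e = (n%:R - 2) *: adjmx e + (n%:R - 1)%:M.
Proof.
move=> eE; pose J : 'M[algC]_n := const_mx 1.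
have AE : adjmx e = J - 1%:M.
  by apply/matrixP => i j; rewrite !mxE eE; case: (i == j); rewrite ?subrr ?subr0.
have JJ : J *m J = n%:R *: J.
  apply/matrixP => i j; rewrite !mxE (eq_bigr (fun=> 1)) => [|k _].
    by rewrite sumr_const card_ord mulr1.
  by rewrite !mxE mulr1.
rewrite AE mulmxBl !mulmxBr JJ !mul1mx !mulmx1.
by apply/matrixP => i j; rewrite !mxE; case: (i == j); rewrite ?mulr1n ?mulr0n; ring.
Qed.

(* The eigenvalues are n - 1 or -1 and sum to 0, and on these two values
   n |x| = (n - 2) x + 2 (n - 1). *)
Lemma energy_complete n (e : rel 'I_n) : (forall i j, e i j = (i != j)) ->
  energyR e = (2 * n.-1)%:R.
Proof.
move=> eE; have se : simple_graph e by split=> [i j|i]; rewrite !eE ?eqxx // eq_sym.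
have [d [-> eig sum0 _ _]] := adjmx_spectrum se.
have quad i : d i ^+ 2 = (n%:R - 2) * d i + (n%:R - 1).
  apply: val_inj; rewrite rmorphXn rmorphD rmorphM !rmorphB !rmorph_nat.
  exact: eigenvalue_quadratic (adjmx_complete_sqr eE) (eig i).
have absE i : n%:R * `|d i| = (n%:R - 2) * d i + 2 * (n%:R - 1).
  have n_ge1 : (1 : algR) <= n%:R by rewrite ler1n (leq_ltn_trans _ (ltn_ord i)).
  have : (d i - (n%:R - 1)) * (d i + 1) = 0.
    by rewrite -[RHS](subrr (d i ^+ 2)) {2}quad; ring.
  move/eqP; rewrite mulf_eq0 subr_eq0 addr_eq0 => /orP [] /eqP ->.
    by rewrite ger0_norm ?subr_ge0 //; ring.
  by rewrite normrN normr1; ring.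
case: n e eE se d eig sum0 quad absE => [|n] e _ _ d _ sum0 _ absE.
  by rewrite big_ord0.
apply: (mulfI (_ : n.+1%:R != 0)); first by rewrite pnatr_eq0.
rewrite mulr_sumr (eq_bigr _ (fun i _ => absE i)) big_split /= -mulr_sumr sum0 mulr0.
by rewrite add0r sumr_const card_ord -mulr_natl natrM -natr1; ring.
Qed.

Lemma det_mx_nat_expand (R : comNzRingType) k (F : nat -> nat -> R) :
  \det (\matrix_(i < k.+1, j < k.+1) F i j) =
  \sum_(j < k.+1) F 0%N j * ((-1) ^+ j * \det (\matrix_(i < k, l < k) F i.+1 (bump j l))).
Proof.
rewrite (expand_det_row _ ord0); apply: eq_bigr => j _.
rewrite /cofactor mxE add0n; congr (_ * (_ * \det _)).
by apply/matrixP => i l; rewrite !mxE.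
Qed.

Lemma det_mx_nat2 (R : comNzRingType) (F : nat -> nat -> R) :
  \det (\matrix_(i < 2, j < 2) F i j) = F 0%N 0%N * F 1%N 1%N - F 0%N 1%N * F 1%N 0%N.
Proof.
rewrite det_mx_nat_expand !big_ord_recr big_ord0 /= !det_mx11 !mxE /bump /=; ring.
Qed.

Lemma det_mx_nat3 (R : comNzRingType) (F : nat -> nat -> R) :
  \det (\matrix_(i < 3, j < 3) F i j) =
  F 0%N 0%N * (F 1%N 1%N * F 2%N 2%N - F 1%N 2%N * F 2%N 1%N)
  - F 0%N 1%N * (F 1%N 0%N * F 2%N 2%N - F 1%N 2%N * F 2%N 0%N)
  + F 0%N 2%N * (F 1%N 0%N * F 2%N 1%N - F 1%N 1%N * F 2%N 0%N).
Proof.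
rewrite det_mx_nat_expand !big_ord_recr big_ord0 /=.
rewrite (det_mx_nat2 (fun a b => F a.+1 (bump 0 b))).
rewrite (det_mx_nat2 (fun a b => F a.+1 (bump 1 b))).
by rewrite (det_mx_nat2 (fun a b => F a.+1 (bump 2 b))) /bump /=; ring.
Qed.

(* [inord] reads out-of-range labels as vertex 0. *)
Definition edge n (e : rel 'I_n.+1) (a b : nat) : bool := e (inord a) (inord b).

Lemma adjmx_edge n (e : rel 'I_n.+1) : adjmx e = \matrix_(i, j) (edge e i j)%:R.
Proof. by apply/matrixP => i j; rewrite !mxE /edge !inord_val. Qed.

Lemma complete_of_edges n (e : rel 'I_n.+1) : simple_graph e ->
  (forall a b, (a < b < n.+1)%N -> edge e a b) -> forall i j, e i j = (i != j).
Proof.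
move=> [sym irr] all_edges i j; case: (ltngtP i j) => [ij|ji|ij].
- by have := all_edges i j; rewrite ij ltn_ord /edge !inord_val neq_ltn ij => ->.
- by have := all_edges j i; rewrite ji ltn_ord /edge !inord_val sym neq_ltn ji orbT => ->.
by rewrite (val_inj ij) irr eqxx.
Qed.

Lemma det_adjmx2 (e : rel 'I_2) : simple_graph e ->
  \det (adjmx e) = (- (edge e 0 1 : int) ^+ 2)%:~R.
Proof.
move=> [sym irr]; rewrite adjmx_edge (det_mx_nat2 (fun a b => (edge e a b)%:R)) /edge.
by rewrite (sym (inord 1)) !irr /=; ring.
Qed.

Lemma det_adjmx3 (e : rel 'I_3) : simple_graph e ->
  \det (adjmx e) = (2 * (edge e 0 1 : int) * (edge e 0 2 : int) * (edge e 1 2 : int))%:~R.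
Proof.
move=> [sym irr]; rewrite adjmx_edge (det_mx_nat3 (fun a b => (edge e a b)%:R)) /edge.
rewrite (sym (inord 1) (inord 0)) (sym (inord 2) (inord 0)) (sym (inord 2) (inord 1)).
by rewrite !irr /=; ring.
Qed.

(* [x], [y] and [z] indicate the three perfect matchings of K4. *)
Lemma det_adjmx4 (e : rel 'I_4) : simple_graph e ->
  let x : int := (edge e 0 1 : int) * (edge e 2 3 : int) in
  let y : int := (edge e 0 2 : int) * (edge e 1 3 : int) in
  let z : int := (edge e 0 3 : int) * (edge e 1 2 : int) in
  \det (adjmx e) = (x ^+ 2 + y ^+ 2 + z ^+ 2 - 2 * (x * y + y * z + z * x))%:~R.
Proof.
move=> [sym irr] /=; rewrite adjmx_edge.
pose F a b : algC := (edge e a b)%:R.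
rewrite (det_mx_nat_expand 3 F) !big_ord_recr big_ord0 /=.
rewrite (det_mx_nat3 (fun a b => F a.+1 (bump 0 b))).
rewrite (det_mx_nat3 (fun a b => F a.+1 (bump 1 b))).
rewrite (det_mx_nat3 (fun a b => F a.+1 (bump 2 b))).
rewrite (det_mx_nat3 (fun a b => F a.+1 (bump 3 b))).
rewrite /F /bump /edge /=.
rewrite (sym (inord 1) (inord 0)) (sym (inord 2) (inord 0)) (sym (inord 3) (inord 0)).
rewrite (sym (inord 2) (inord 1)) (sym (inord 3) (inord 1)) (sym (inord 3) (inord 2)).
by rewrite !irr /=; ring.
Qed.

Lemma small_nonsingular n (e : rel 'I_n) : (2 <= n <= 4)%N -> simple_graph e ->
  \det (adjmx e) != 0 -> (forall i j, e i j = (i != j)) \/ (n = 4 /\ \det (adjmx e) = 1).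
Proof.
case/andP; case: n e => [|[|[|[|[|n]]]]] // e _ _ se.
- rewrite det_adjmx2 // intr_eq0; case e01 : (edge e 0 1) => //= _; left.
  apply: complete_of_edges => // a b /andP [ab b2].
  by case: a ab => [|a] ab; case: b ab b2 => [|[|b]] ab b2 //; lia.
- rewrite det_adjmx3 // intr_eq0.
  case e01 : (edge e 0 1); case e02 : (edge e 0 2); case e12 : (edge e 1 2) => //= _; left.
  apply: complete_of_edges => // a b /andP [ab b3].
  by case: a ab => [|[|a]] ab; case: b ab b3 => [|[|[|b]]] ab b3 //; lia.
rewrite det_adjmx4 // intr_eq0.
case e01 : (edge e 0 1); case e02 : (edge e 0 2); case e03 : (edge e 0 3);
  case e12 : (edge e 1 2); case e13 : (edge e 1 3); case e23 : (edge e 2 3) => //= _;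
  try by right.
left; apply: complete_of_edges => // a b /andP [ab b4].
by case: a ab => [|[|[|a]]] ab; case: b ab b4 => [|[|[|[|b]]]] ab b4 //; lia.
Qed.

Lemma energy_lb_small n (e : rel 'I_n) : (2 <= n <= 4)%N -> simple_graph e ->
  \det (adjmx e) != 0 -> energy_lb algR n (degsum e) <= energyR e.
Proof.
move=> n_range se det_e; have [eE|[n4 det1]] := small_nonsingular n_range se det_e.
  rewrite energy_complete // degsum_complete //.
  by apply: energy_lb_complete; case/andP: n_range.
subst n; have [d [-> _ sum0 sq prod1]] := adjmx_spectrum se.
have M_ge4 := nonsingular_degsum det_e.
have M_le12 := degsum_le se.2.
have {}prod1 : \prod_i d i = 1 by apply: val_inj; rewrite prod1 det1.
rewrite !big_ord_recl !big_ord0 !addr0 !mulr1 in sum0 sq prod1 *.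
rewrite !addrA in sum0; rewrite !addrA in sq; rewrite !mulrA in prod1; rewrite !addrA.
have -> : energy_lb algR 4 (degsum e) = (20 + (degsum e)%:R) / 6.
  by rewrite /energy_lb /lb_slack /=; field.
apply: abs4_sum_ge => //; rewrite !ler_nat; lia.
Qed.

(** * Reduction to connected graphs *)

Lemma energy_lb_leE n (e : rel 'I_n) : (5 <= n)%N -> simple_graph e ->
  (energy_lb algR n (degsum e) <= energyR e) = ((n.-1)%:R + avgdeg e <= energy e).
Proof.
move=> n5 se; rewrite energy_lb_large // avgdegE //.
by rewrite [LHS]/(val _ <= val _) rmorphD fmorph_div !rmorph_nat.
Qed.

Section Reduction.
Hypothesis connected_bound : forall (n : nat) (e : rel 'I_n), (5 <= n)%N ->
  simple_graph e -> connected_graph e -> \det (adjmx e) != 0 ->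
  (n.-1)%:R + avgdeg e <= energy e.

Lemma energy_lb_nonsingular n (e : rel 'I_n) : (0 < n)%N -> simple_graph e ->
  \det (adjmx e) != 0 -> energy_lb algR n (degsum e) <= energyR e.
Proof.
elim/ltn_ind: n e => n IH e n_gt0 se det_e.
have n_ge2 := nonsingular_order n_gt0 se.2 det_e.
have [n_le4|n_ge5] := leqP n 4; first by apply: energy_lb_small; rewrite ?n_ge2.
have [conn|/forallPn [x /forallPn [y nxy]]] := boolP [forall x, [forall y, connect e x y]].
  rewrite energy_lb_leE //; apply: connected_bound => // x y.
  exact: (forallP (forallP conn x) y).
have [n1 [n2 [e1 [e2 [[n12 n1_gt0 n2_gt0 se1 se2] [eig det12 deg12]]]]]] :=
  disconnected_split se nxy.
move: det_e; rewrite det12 mulf_eq0 negb_or => /andP [det1 det2].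
have lb1 : energy_lb algR n1 (degsum e1) <= energyR e1 by apply: IH => //; lia.
have lb2 : energy_lb algR n2 (degsum e2) <= energyR e2 by apply: IH => //; lia.
rewrite (energyR_cat eig) deg12 -n12; apply: le_trans (lerD lb1 lb2).
apply: energy_lb_add; rewrite ?nonsingular_degsum //.
  exact: nonsingular_order n1_gt0 se1.2 det1.
exact: nonsingular_order n2_gt0 se2.2 det2.
Qed.

End Reduction.

Theorem theorem3p6 :
  (forall (n : nat) (e : rel 'I_n), (5 <= n)%N -> simple_graph e ->
     connected_graph e -> \det (adjmx e) != 0 ->
     (n.-1)%:R + avgdeg e <= energy e) ->
  forall (n : nat) (e : rel 'I_n), (5 <= n)%N -> simple_graph e ->
     \det (adjmx e) != 0 ->
     (n.-1)%:R + avgdeg e <= energy e.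
Proof.
move=> connected_bound n e n5 se det_e.
rewrite -energy_lb_leE //; apply: energy_lb_nonsingular => //.
exact: leq_trans n5.
Qed.
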